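(* Let $k\ge1$ and let $m$ be an integer such that $a_{k+1}q_k<m<q_{k+1}$. If $m\ne q_{k+1,a_{k+1}-1}$, and moreover $m\neq (a_{k+1}-1)q_k+2q_{k-1}$ in case $a_k=1$, then $\|m\alpha\|\ge\|q_{k-1}\alpha\|+(a_{k+1}+1)\|q_k\alpha\|$.
   Context: $\alpha\in(0,1)$ irrational, $\alpha=[0;a_1,a_2,\ldots]$ with positive integers $a_i$, $a_1\ge2$; $q_{-1}=0$, $q_0=1$, $q_1=a_1$, $q_k=a_kq_{k-1}+q_{k-2}$ ($k\ge2$). For $j\ge2$ and $1\le\ell<a_j$, $q_{j,\ell}=\ell q_{j-1}+q_{j-2}$ (denominators of semiconvergents). $\|x\|$ is the distance from $x$ to the nearest integer. *)

From Stdlib Require Import Reals ZArith Lra Lia.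
Open Scope R_scope.

Definition floorR (x : R) : Z := Int_part x.

Definition dist_int (x : R) : R :=
  Rmin (x - IZR (floorR x)) (IZR (floorR x) + 1 - x).

Definition irrational (x : R) : Prop :=
  ~ exists (p q : Z), q <> 0%Z /\ x = IZR p / IZR q.

(* Continued fraction expansion alpha = [0; a_1, a_2, ...] via the Gauss map:
   cf_rem alpha 0 = alpha, cf_rem alpha (n+1) = 1/cf_rem alpha n - floor(1/cf_rem alpha n),
   a_(n+1) = floor (1 / cf_rem alpha n). *)
Fixpoint cf_rem (alpha : R) (n : nat) : R :=
  match n with
  | O => alpha
  | S n' => / cf_rem alpha n' - IZR (floorR (/ cf_rem alpha n'))
  end.

(* partial quotients a_n (n >= 1); cf_a alpha 0 = 0 is the integer part of alpha in (0,1) *)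
Definition cf_a (alpha : R) (n : nat) : Z :=
  match n with
  | O => 0%Z
  | S n' => floorR (/ cf_rem alpha n')
  end.

Fixpoint cf_q_pair (alpha : R) (n : nat) : Z * Z :=
  (* returns (q_n, q_(n-1)) with q_(-1) = 0 *)
  match n with
  | O => (1%Z, 0%Z)
  | S n' => let '(x, y) := cf_q_pair alpha n' in
            ((cf_a alpha (S n') * x + y)%Z, x)
  end.

Definition cf_q (alpha : R) (n : nat) : Z := fst (cf_q_pair alpha n).

(* semiconvergent denominators q_(j,l) = l q_(j-1) + q_(j-2), for j >= 2 *)
Definition cf_qsemi (alpha : R) (j : nat) (l : Z) : Z :=
  (l * cf_q alpha (j - 1) + cf_q alpha (j - 2))%Z.

From Stdlib Require Import Reals ZArith Lra Lia Psatz.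
Open Scope R_scope.

(* Write theta_n = q_n alpha - p_n and zeta = 1 / r_k = [a_(k+1); a_(k+2), ...] >= a_(k+1),
   so that theta_(k-1) = - zeta theta_k.  Since q_k p_(k-1) - p_k q_(k-1) = +-1, any pair
   (m, p) of integers is x (q_k, p_k) + y (q_(k-1), p_(k-1)) with x, y integers, and then
   m alpha - p = (x - y zeta) theta_k.  As q_(k+1) = a_(k+1) q_k + q_(k-1), the constraint
   a_(k+1) q_k < m < q_(k+1) leaves only x >= a_(k+1) + 1, y <= -1 or x <= a_(k+1) - 1, y >= 3
   (up to the excluded m = (a_(k+1) - 1) q_k + 2 q_(k-1)), and in both cases
   |x - y zeta| >= zeta + a_(k+1) + 1, i.e. |m alpha - p| >= |theta_(k-1)| + (a_(k+1) + 1) |theta_k|. *)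

Lemma irrational_neq_IZR x z : irrational x -> x <> IZR z.
Proof.
  intros Hx ->. apply Hx. exists z, 1%Z. split; [lia|]. simpl. field.
Qed.

Lemma irrational_inv x : irrational x -> irrational (/ x).
Proof.
  intros Hx [p [q [Hq E]]]. apply Hx.
  assert (Hx0 : x <> 0) by exact (irrational_neq_IZR x 0 Hx).
  assert (Hp : p <> 0%Z).
  { intros ->. apply (Rinv_neq_0_compat x Hx0). rewrite E. unfold Rdiv. ring. }
  exists q, p. split; [exact Hp|].
  rewrite <- (Rinv_inv x), E. field. split; apply not_0_IZR; assumption.
Qed.

Lemma irrational_sub_IZR x z : irrational x -> irrational (x - IZR z).
Proof.
  intros Hx [p [q [Hq E]]]. apply Hx. exists (p + z * q)%Z, q. split; [exact Hq|].
  rewrite plus_IZR, mult_IZR. apply not_0_IZR in Hq.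
  replace x with (x - IZR z + IZR z) by ring. rewrite E. field. exact Hq.
Qed.

Lemma gap_coords_cases (a Q Q' x y : Z) :
  (1 <= a)%Z -> (1 <= Q' <= Q)%Z ->
  (a * Q < x * Q + y * Q' < a * Q + Q')%Z ->
  (x * Q + y * Q' <> (a - 1) * Q + 2 * Q')%Z ->
  (a + 1 <= x /\ y <= -1 \/ x <= a - 1 /\ 3 <= y)%Z.
Proof.
  intros Ha HQ Hm Hex.
  destruct (Z_lt_le_dec y 0) as [Hy|Hy]; [left; split; nia|right].
  destruct (Z.eq_dec y 0) as [->|Hy0]; [exfalso; destruct (Z_le_gt_dec x a); nia|].
  assert (Hx : (x <= a - 1)%Z) by nia. split; [exact Hx|].
  destruct (Z_lt_le_dec x 0) as [Hx0|Hx0]; [nia|].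
  destruct (Z.eq_dec y 2) as [->|Hy2]; [|nia].
  destruct (Z.eq_dec x (a - 1)) as [->|Hxa]; [lia|nia].
Qed.

Lemma Rabs_sub_mul_ge (a x y : Z) (c : R) :
  (0 <= a)%Z -> IZR a <= c ->
  (a + 1 <= x /\ y <= -1 \/ x <= a - 1 /\ 3 <= y)%Z ->
  c + IZR a + 1 <= Rabs (IZR x - c * IZR y).
Proof.
  intros Ha Hc [[Hx Hy]|[Hx Hy]];
    apply IZR_le in Ha, Hx, Hy; rewrite ?plus_IZR, ?minus_IZR in Hx.
  - eapply Rle_trans; [|apply RRle_abs]. nra.
  - rewrite <- Rabs_Ropp. eapply Rle_trans; [|apply RRle_abs]. nra.
Qed.

Lemma unimodular_coords (Q P Q' P' m p : Z) :
  Z.abs (Q * P' - P * Q') = 1%Z ->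
  exists x y, m = (x * Q + y * Q')%Z /\ p = (x * P + y * P')%Z.
Proof.
  intros Hdet. set (D := (Q * P' - P * Q')%Z) in Hdet.
  assert (HD : (D * D = 1)%Z) by (destruct (Z.abs_spec D); lia).
  exists (D * (m * P' - p * Q'))%Z, (D * (Q * p - P * m))%Z.
  split; [transitivity (m * (D * D))%Z | transitivity (p * (D * D))%Z];
    solve [rewrite HD; ring | unfold D; ring].
Qed.

Lemma dist_int_le z p : dist_int z <= Rabs (z - IZR p).
Proof.
  unfold dist_int, floorR. destruct (base_Int_part z) as [B1 B2].
  destruct (Z_le_gt_dec p (Int_part z)) as [H|H].
  - apply IZR_le in H. eapply Rle_trans; [apply Rmin_l|].
    eapply Rle_trans; [|apply RRle_abs]. lra.
  - assert (H' : (Int_part z + 1 <= p)%Z) by lia. apply IZR_le in H'.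
    rewrite plus_IZR in H'.
    eapply Rle_trans; [apply Rmin_r|]. rewrite <- Rabs_Ropp.
    eapply Rle_trans; [|apply RRle_abs]. lra.
Qed.

Lemma dist_int_glb z T : (forall p, T <= Rabs (z - IZR p)) -> T <= dist_int z.
Proof.
  intros H. unfold dist_int, floorR. destruct (base_Int_part z) as [B1 B2].
  apply Rmin_glb.
  - specialize (H (Int_part z)). rewrite Rabs_right in H; lra.
  - specialize (H (Int_part z + 1)%Z). rewrite plus_IZR in H.
    rewrite Rabs_left1 in H; lra.
Qed.

Fixpoint cf_p (alpha : R) (n : nat) : Z :=
  match n with
  | O => 0%Z
  | S O => 1%Z
  | S (S n' as n1) as n2 => (cf_a alpha n2 * cf_p alpha n1 + cf_p alpha n')%Z
  end.

Definition cf_err (alpha : R) (n : nat) : R :=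
  IZR (cf_q alpha n) * alpha - IZR (cf_p alpha n).

Lemma cf_q_0 alpha : cf_q alpha 0 = 1%Z.
Proof. reflexivity. Qed.

Lemma cf_q_1 alpha : cf_q alpha 1 = cf_a alpha 1.
Proof. unfold cf_q; simpl. lia. Qed.

Lemma cf_q_succ_succ alpha n :
  cf_q alpha (S (S n)) = (cf_a alpha (S (S n)) * cf_q alpha (S n) + cf_q alpha n)%Z.
Proof. unfold cf_q; cbn [cf_q_pair]. now destruct (cf_q_pair alpha n). Qed.

Lemma cf_p_succ_succ alpha n :
  cf_p alpha (S (S n)) = (cf_a alpha (S (S n)) * cf_p alpha (S n) + cf_p alpha n)%Z.
Proof. reflexivity. Qed.

Lemma cf_det alpha n :
  Z.abs (cf_q alpha (S n) * cf_p alpha n - cf_p alpha (S n) * cf_q alpha n) = 1%Z.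
Proof.
  induction n as [|n IH]; [simpl; lia|].
  rewrite cf_q_succ_succ, cf_p_succ_succ, <- IH, <- Z.abs_opp. f_equal. ring.
Qed.

Lemma cf_err_succ_succ alpha n :
  cf_err alpha (S (S n)) = IZR (cf_a alpha (S (S n))) * cf_err alpha (S n) + cf_err alpha n.
Proof.
  unfold cf_err. rewrite cf_q_succ_succ, cf_p_succ_succ, !plus_IZR, !mult_IZR. ring.
Qed.

Lemma cf_a_le_inv_rem alpha n : IZR (cf_a alpha (S n)) <= / cf_rem alpha n.
Proof. apply base_Int_part. Qed.

Section ContinuedFraction.

Variable alpha : R.
Hypothesis alpha_bounds : 0 < alpha < 1.
Hypothesis alpha_irrational : irrational alpha.

Lemma cf_rem_irrational_bounds n :
  irrational (cf_rem alpha n) /\ 0 < cf_rem alpha n < 1.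
Proof.
  induction n as [|n [Hirr Hr]]; [split; assumption|].
  change (cf_rem alpha (S n))
    with (/ cf_rem alpha n - IZR (floorR (/ cf_rem alpha n))).
  unfold floorR. destruct (base_Int_part (/ cf_rem alpha n)) as [B1 B2].
  assert (Hirr' := irrational_sub_IZR _ (Int_part (/ cf_rem alpha n))
                     (irrational_inv _ Hirr)).
  split; [exact Hirr'|].
  pose proof (irrational_neq_IZR _ 0 Hirr'). lra.
Qed.

Lemma cf_rem_bounds n : 0 < cf_rem alpha n < 1.
Proof. apply cf_rem_irrational_bounds. Qed.

Lemma cf_a_ge1 n : (1 <= cf_a alpha (S n))%Z.
Proof.
  destruct (cf_rem_bounds n) as [H0 H1].
  assert (Hinv : 1 < / cf_rem alpha n) by (rewrite <- Rinv_1; apply Rinv_lt_contravar; lra).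
  unfold cf_a, floorR. destruct (base_Int_part (/ cf_rem alpha n)) as [_ B].
  assert (0 < Int_part (/ cf_rem alpha n))%Z by (apply lt_IZR; lra). lia.
Qed.

Lemma cf_q_ge1 n : (1 <= cf_q alpha n)%Z.
Proof.
  enough (H : (1 <= cf_q alpha n /\ 1 <= cf_q alpha (S n))%Z) by apply H.
  induction n as [|n [IH1 IH2]].
  - rewrite cf_q_0, cf_q_1. pose proof (cf_a_ge1 0). lia.
  - split; [exact IH2|]. rewrite cf_q_succ_succ. pose proof (cf_a_ge1 (S n)). nia.
Qed.

Lemma cf_q_mul_le_succ n : (cf_a alpha (S n) * cf_q alpha n <= cf_q alpha (S n))%Z.
Proof.
  destruct n as [|n]; [rewrite cf_q_0, cf_q_1; lia|].
  rewrite cf_q_succ_succ. pose proof (cf_q_ge1 n). lia.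
Qed.

Lemma cf_q_le_succ n : (cf_q alpha n <= cf_q alpha (S n))%Z.
Proof.
  pose proof (cf_q_mul_le_succ n). pose proof (cf_a_ge1 n). pose proof (cf_q_ge1 n). nia.
Qed.

Lemma cf_err_succ n : cf_err alpha (S n) = - cf_rem alpha (S n) * cf_err alpha n.
Proof.
  induction n as [|n IH].
  - unfold cf_err. rewrite cf_q_1, cf_q_0. simpl cf_rem. simpl cf_p.
    change (floorR (/ alpha)) with (cf_a alpha 1). field. lra.
  - rewrite cf_err_succ_succ.
    change (cf_rem alpha (S (S n)))
      with (/ cf_rem alpha (S n) - IZR (cf_a alpha (S (S n)))).
    destruct (cf_rem_bounds (S n)).
    replace (cf_err alpha n) with (- cf_err alpha (S n) / cf_rem alpha (S n))
      by (rewrite IH; field; lra).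
    field. lra.
Qed.

Lemma cf_err_combination n x y :
  IZR (x * cf_q alpha (S n) + y * cf_q alpha n) * alpha
    - IZR (x * cf_p alpha (S n) + y * cf_p alpha n)
  = (IZR x - IZR y / cf_rem alpha (S n)) * cf_err alpha (S n).
Proof.
  destruct (cf_rem_bounds (S n)).
  transitivity (IZR x * cf_err alpha (S n) + IZR y * cf_err alpha n).
  { unfold cf_err. rewrite !plus_IZR, !mult_IZR. ring. }
  rewrite (cf_err_succ n). field. lra.
Qed.

Lemma dist_int_ge_gap n m :
  (cf_a alpha (S (S n)) * cf_q alpha (S n) < m < cf_q alpha (S (S n)))%Z ->
  m <> ((cf_a alpha (S (S n)) - 1) * cf_q alpha (S n) + 2 * cf_q alpha n)%Z ->
  Rabs (cf_err alpha n) + IZR (cf_a alpha (S (S n)) + 1) * Rabs (cf_err alpha (S n))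
    <= dist_int (IZR m * alpha).
Proof.
  intros Hm Hex. rewrite cf_q_succ_succ in Hm.
  apply dist_int_glb. intros p.
  destruct (unimodular_coords _ _ _ _ m p (cf_det alpha n)) as [x [y [-> ->]]].
  rewrite cf_err_combination.
  destruct (cf_rem_bounds (S n)) as [Hr0 Hr1].
  set (a := cf_a alpha (S (S n))) in *.
  set (r := cf_rem alpha (S n)) in *.
  assert (Hcases := gap_coords_cases a _ _ x y (cf_a_ge1 (S n))
                      (conj (cf_q_ge1 n) (cf_q_le_succ n)) Hm Hex).
  assert (Ha : (0 <= a)%Z) by (pose proof (cf_a_ge1 (S n)); lia).
  pose proof (Rabs_sub_mul_ge a x y (/ r) Ha (cf_a_le_inv_rem alpha (S n)) Hcases) as Hxy.
  assert (Herr : Rabs (cf_err alpha n) = / r * Rabs (cf_err alpha (S n))).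
  { rewrite cf_err_succ; fold r.
    rewrite Rabs_mult, Rabs_Ropp, (Rabs_right r) by lra. field. lra. }
  rewrite Herr, Rabs_mult, plus_IZR.
  replace (IZR y / r) with (/ r * IZR y) by (unfold Rdiv; ring).
  pose proof (Rabs_pos (cf_err alpha (S n))). nra.
Qed.

End ContinuedFraction.

Theorem lemma3p3 (alpha : R) (k : nat) (m : Z) :
  0 < alpha < 1 ->
  irrational alpha ->
  (2 <= cf_a alpha 1)%Z ->
  (1 <= k)%nat ->
  (cf_a alpha (S k) * cf_q alpha k < m < cf_q alpha (S k))%Z ->
  m <> cf_qsemi alpha (S k) (cf_a alpha (S k) - 1) ->
  (cf_a alpha k = 1%Z ->
     m <> ((cf_a alpha (S k) - 1) * cf_q alpha k + 2 * cf_q alpha (k - 1))%Z) ->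
  dist_int (IZR m * alpha) >=
    dist_int (IZR (cf_q alpha (k - 1)) * alpha)
    + IZR (cf_a alpha (S k) + 1) * dist_int (IZR (cf_q alpha k) * alpha).
Proof.
  intros Ha Hirr _ Hk Hm _ Hex.
  destruct k as [|n]; [lia|].
  rewrite Nat.sub_succ, Nat.sub_0_r in *.
  assert (Hgap : m <> ((cf_a alpha (S (S n)) - 1) * cf_q alpha (S n) + 2 * cf_q alpha n)%Z).
  { (* if a_k >= 2 then q_k >= 2 q_(k-1), so the exceptional value is <= a_(k+1) q_k *)
    destruct (Z.eq_dec (cf_a alpha (S n)) 1) as [E|E]; [exact (Hex E)|].
    pose proof (cf_a_ge1 alpha Ha Hirr n). pose proof (cf_q_ge1 alpha Ha Hirr n).
    pose proof (cf_q_mul_le_succ alpha Ha Hirr n). nia. }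
  pose proof (dist_int_ge_gap alpha Ha Hirr n m Hm Hgap).
  pose proof (dist_int_le (IZR (cf_q alpha n) * alpha) (cf_p alpha n)).
  pose proof (dist_int_le (IZR (cf_q alpha (S n)) * alpha) (cf_p alpha (S n))).
  assert (0 <= IZR (cf_a alpha (S (S n)) + 1))
    by (apply IZR_le; pose proof (cf_a_ge1 alpha Ha Hirr (S n)); lia).
  unfold cf_err in *. nra.
Qed.
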